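(* Let $G$ be an $n$-node graph of maximum degree $\Delta$, and let $K$ be an almost-clique of an $\epsilon$-almost-clique decomposition of $G$ with $\epsilon=10^{-5}$. Let $k\le \Delta/(C\log n)$ be an integer, for some large enough constant $C>0$. Suppose each $v\in K$ independently samples $t(v)\in[k]$ uniformly at random, and let $T_i=\{v\in K: t(v)=i\}$ for $i\in[k]$. Then, with high probability, for every $i\in[k]$ and every $u,w\in K$, $|T_i\cap N(u)\cap N(w)|\ge (C/4)\log n$.
   Context: $N(v)$ denotes the set of neighbors of $v$ in $G$. An $\epsilon$-almost-clique decomposition is a partition of $V$ into $V_{\mathrm{sparse}},K_1,\ldots,K_k$ such that nodes in $V_{\mathrm{sparse}}$ are $\Omega(\epsilon^2\Delta)$-sparse (sparsity $\zeta_v=\frac1\Delta(\binom{\Delta}{2}-m(N(v)))$ with $m(N(v))$ the number of edges inside $N(v)$) and each almost-clique $K_i$ satisfies $|K_i|\le(1+\epsilon)\Delta$, $|N(v)\cap K_i|\ge(1-\epsilon)\Delta$ for all $v\in K_i$, and $|N(v)\cap K_i|\le(1-\epsilon/2)\Delta$ for all $v\notin K_i$. ''With high probability'' means with probability at least $1-n^{-c}$, where $c>0$ can be made arbitrarily large by choosing the constant $C$ large enough. *)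

From mathcomp Require Import all_boot all_order all_algebra.
From mathcomp Require Import reals exp.
Set Implicit Arguments. Unset Strict Implicit. Unset Printing Implicit Defensive.
Import Order.TTheory GRing.Theory Num.Theory.
Local Open Scope ring_scope.

Section Graph.
Variables (V : finType) (e : rel V).

Definition simple_graph := symmetric e /\ irreflexive e.

Definition nbhd (v : V) : {set V} := [set u | e v u].

Definition maxdeg : nat := \max_(v : V) #|nbhd v|.

Definition edges_in (R : realType) (S : {set V}) : R :=
  (#|[set p : V * V | [&& p.1 \in S, p.2 \in S & e p.1 p.2]]|)%:R / 2.

Definition sparsity (R : realType) (v : V) : R :=
  (maxdeg%:R)^-1 * ('C(maxdeg, 2)%:R - edges_in R (nbhd v)).

Definition almost_clique (R : realType) (eps : R) (K : {set V}) : Prop :=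
  [/\ (#|K|%:R <= (1 + eps) * maxdeg%:R),
      (forall v, v \in K -> (1 - eps) * maxdeg%:R <= #|nbhd v :&: K|%:R) &
      (forall v, v \notin K -> #|nbhd v :&: K|%:R <= (1 - eps / 2) * maxdeg%:R)].

(* epsilon-almost-clique decomposition (Vsparse, P = {K_1,...,K_k});
   alpha is the constant hidden in the Omega(eps^2 Delta) sparsity bound *)
Definition almost_clique_decomposition (R : realType) (alpha eps : R)
    (Vsparse : {set V}) (P : {set {set V}}) : Prop :=
  [/\ partition P (~: Vsparse),
      (forall v, v \in Vsparse -> alpha * eps ^+ 2 * maxdeg%:R <= sparsity R v) &
      (forall K, K \in P -> almost_clique eps K)].

End Graph.

Definition good_sampling (R : realType) (V : finType) (e : rel V) (K : {set V})
    (k : nat) (C : R) (t : {ffun V -> 'I_k}) : bool :=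
  [forall i : 'I_k, forall u in K, forall w in K,
     C / 4 * ln (#|V|%:R : R) <=
       #|[set v in K | t v == i] :&: nbhd e u :&: nbhd e w|%:R].

(* probability under the uniform distribution on functions V -> [k]
   (vertices independently sample uniformly from [k]) *)
Definition prob_uniform (R : realType) (V : finType) (k : nat)
    (E : pred {ffun V -> 'I_k}) : R :=
  #|[set t | E t]|%:R / (k ^ #|V|)%:R.

From mathcomp Require Import all_boot all_order all_algebra.
From mathcomp Require Import reals exp.
From mathcomp Require Import sequences ring lra.
Set Implicit Arguments. Unset Strict Implicit. Unset Printing Implicit Defensive.
Import Order.TTheory GRing.Theory Num.Theory.
Local Open Scope ring_scope.

(* Union bound over the k |K|^2 triples (i, u, w) with u, w in K, each
   handled by an exponential-moment bound.  Since K is an almost-clique, u and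
   w have a set S of at least (1 - 3 eps) Delta common neighbours in K, and
   each vertex of S lands in T_i independently with probability 1/k, so
   E[e^-|T_i :&: S|] = (1 - (1 - 1/e)/k)^|S| <= exp(-|S| / (2k)).  By Markov's
   inequality, |T_i :&: S| < (C/4) ln n with probability at most
   n^(C/4) exp(-(9/20) C ln n) = n^(-C/5), using Delta >= k C ln n; taking
   C >= 5 (c + 3) absorbs the n^3 triples. *)

Section UniformColoring.
Variables (V : finType) (k : nat).

Lemma sum_ffun_exp_card (R : comPzSemiRingType) (P : V -> 'I_k -> bool) (x : R) :
  \sum_(t : {ffun V -> 'I_k}) x ^+ #|[set v | P v (t v)]| =
  \prod_v \sum_a (if P v a then x else 1).
Proof.
rewrite bigA_distr_bigA; apply: eq_bigr => t _.
rewrite -prodr_const big_mkcond /=; apply: eq_bigr => v _.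
by rewrite inE.
Qed.

Lemma sum_exp_card_color_class (R : comPzSemiRingType) (S : {set V}) (i : 'I_k) (x : R) :
  \sum_(t : {ffun V -> 'I_k}) x ^+ #|[set v in S | t v == i]| =
  (x + k.-1%:R) ^+ #|S| * k%:R ^+ #|~: S|.
Proof.
rewrite (sum_ffun_exp_card (fun v a => (v \in S) && (a == i))) (bigID (mem S)) /=.
congr (_ * _); rewrite -prodr_const -?cardsE; apply: eq_big => v //=.
- move=> vS; rewrite vS (bigD1 i) //= eqxx.
  rewrite (eq_bigr (fun _ => 1)); last by move=> a /negbTE ->.
  by rewrite sumr_const cardC1 card_ord.
- by rewrite inE.
- by move=> /negbTE ->; rewrite sumr_const card_ord.
Qed.

Lemma sum_expR_card_color_class_le (R : realType) (S : {set V}) (i : 'I_k) (x : R) :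
  0 <= x <= 1 ->
  \sum_(t : {ffun V -> 'I_k}) x ^+ #|[set v in S | t v == i]| <=
  (k ^ #|V|)%:R * expR (- ((1 - x) * #|S|%:R / k%:R)).
Proof.
move=> /andP[x0 x1].
have k0 : (0 < k)%N by rewrite (leq_ltn_trans _ (ltn_ord i)).
have kpos : 0 < k%:R :> R by rewrite ltr0n.
rewrite sum_exp_card_color_class.
have -> : (k ^ #|V|)%:R = k%:R ^+ #|S| * k%:R ^+ #|~: S| :> R.
  by rewrite -exprD cardsC natrX.
rewrite mulrAC; apply: ler_wpM2r; first by rewrite exprn_ge0 ?ler0n.
have -> : (1 - x) * #|S|%:R / k%:R = #|S|%:R * ((1 - x) / k%:R) by rewrite mulrAC mulrC.
rewrite -mulrN expRM_natl -exprMn.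
apply: lerXn2r; rewrite ?nnegrE ?addr_ge0 ?mulr_ge0 ?expR_ge0 //.
have <- : k%:R * (1 + - ((1 - x) / k%:R)) = x + k.-1%:R.
  by rewrite -[in LHS](prednK k0) -natr1; field; rewrite natr1 prednK // gt_eqF.
exact/ler_wpM2l/expR_ge1Dx/ltW.
Qed.

End UniformColoring.

Lemma card_exists_lt_le_sum_expR (R : realType) (I T : finType) (P : pred I)
    (f : I -> T -> nat) (L : R) :
  #|[set t | [exists p in P, (f p t)%:R < L]]|%:R <=
  expR L * \sum_(p in P) \sum_t expR (-1) ^+ f p t.
Proof.
rewrite -sumr_const exchange_big mulr_sumr /= big_mkcond /=.
apply: ler_sum => t _; rewrite mulr_sumr.
have term_ge0 p : 0 <= expR L * expR (-1) ^+ f p t by rewrite mulr_ge0 ?exprn_ge0 ?expR_ge0.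
case: ifP => [|_]; last by rewrite sumr_ge0.
rewrite inE => /exists_inP[p Pp ltL].
rewrite (bigD1 p) //= ler_wpDr ?sumr_ge0 //.
by rewrite -expRM_natl mulrN1 -expRD ltW // expR_gt1 subr_gt0.
Qed.

Lemma expRN1_le_half (R : realType) : expR (-1) <= 1 / 2 :> R.
Proof.
have e2 : 2 <= expR 1 :> R by have := expR_ge1Dx (1 : R); lra.
rewrite expRN ler_pdivlMr //.
by rewrite mulrC ler_pdivrMr ?expR_gt0 // mul1r.
Qed.

Lemma ln2_ge_half (R : realType) : 1 / 2 <= ln (2 : R).
Proof.
have := @le_ln1Dx R (- (1 / 2)) ltac:(lra).
have -> : 1 + - (1 / 2) = 2^-1 :> R by lra.
rewrite lnV ?posrE //; lra.
Qed.

Lemma le_div_den_gt0 (R : realFieldType) (a b c : R) :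
  0 < a -> 0 <= b -> a <= b / c -> 0 < c /\ a * c <= b.
Proof.
move=> a0 b0 le_abc.
have c0 : 0 < c.
  rewrite ltNge; apply/negP => c_le0.
  have : b / c <= 0 by rewrite mulr_ge0_le0 // invr_le0.
  lra.
by split; rewrite // -ler_pdivlMr.
Qed.

Lemma prob_uniform_ge (R : realType) (V : finType) (k : nat)
    (E : pred {ffun V -> 'I_k}) (d : R) :
  (0 < k)%N -> #|[set t | ~~ E t]|%:R <= d * (k ^ #|V|)%:R ->
  1 - d <= prob_uniform R E.
Proof.
move=> k0 bad_le.
have N0 : 0 < (k ^ #|V|)%:R :> R by rewrite ltr0n expn_gt0 k0.
have cardE : #|[set t | E t]|%:R = (k ^ #|V|)%:R - #|[set t | ~~ E t]|%:R :> R.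
  have := cardsC [set t | E t]; rewrite card_ffun card_ord.
  have -> : ~: [set t | E t] = [set t | ~~ E t] by apply/setP => t; rewrite !inE.
  by move=> /(congr1 (fun m : nat => m%:R : R)); rewrite natrD => <-; rewrite addrK.
rewrite /prob_uniform cardE ler_pdivlMr //; lra.
Qed.

Lemma maxdeg_le_card (V : finType) (e : rel V) : (maxdeg e <= #|V|)%N.
Proof. by apply/bigmax_leqP => v _; apply: max_card. Qed.

Lemma almost_clique_common_nbhd (R : realType) (V : finType) (e : rel V) (eps : R)
    (K : {set V}) (u w : V) :
  almost_clique e eps K -> u \in K -> w \in K ->
  (1 - 3 * eps) * (maxdeg e)%:R <= #|K :&: nbhd e u :&: nbhd e w|%:R.
Proof.
move=> [cardK nbhdK _] uK wK.
have := cardsUI (nbhd e u :&: K) (nbhd e w :&: K).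
have -> : nbhd e u :&: K :&: (nbhd e w :&: K) = K :&: nbhd e u :&: nbhd e w.
  by apply/setP => v; rewrite !inE; case: (v \in K); rewrite ?andbF ?andbT.
have : (#|nbhd e u :&: K :|: nbhd e w :&: K| <= #|K|)%N.
  by apply: subset_leq_card; apply/subsetP => v; rewrite !inE => /orP[]/andP[].
rewrite -(ler_nat R) => cardU /(congr1 (fun m : nat => m%:R : R)); rewrite !natrD.
have := nbhdK u uK; have := nbhdK w wK; lra.
Qed.

Lemma sum_expRN1_common_class_le (R : realType) (V : finType) (e : rel V) (eps : R)
    (K : {set V}) (k : nat) (i : 'I_k) (u w : V) :
  almost_clique e eps K -> u \in K -> w \in K ->
  \sum_(t : {ffun V -> 'I_k})
     expR (-1) ^+ #|[set v in K | t v == i] :&: nbhd e u :&: nbhd e w| <=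
  (k ^ #|V|)%:R * expR (- ((1 - 3 * eps) * (maxdeg e)%:R / (2 * k%:R))).
Proof.
move=> acK uK wK.
have kpos : 0 < k%:R :> R by rewrite ltr0n (leq_ltn_trans _ (ltn_ord i)).
have x_le := expRN1_le_half R.
under eq_bigr => t _ do have -> : [set v in K | t v == i] :&: nbhd e u :&: nbhd e w =
    [set v in K :&: nbhd e u :&: nbhd e w | t v == i]
  by apply/setP => v; rewrite !inE; case: (t v == i); rewrite ?andbF ?andbT.
apply: (le_trans (sum_expR_card_color_class_le _ _ _)).
  by rewrite expR_ge0 expR_le1 lerN10.
rewrite ler_wpM2l ?ler0n // ler_expR lerN2 invfM mulrA ler_pM2r ?invr_gt0 //.
have := almost_clique_common_nbhd acK uK wK.
set s := #|_|%:R => s_ge.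
have : 0 <= (1 / 2 - expR (-1)) * s by rewrite mulr_ge0 ?ler0n ?subr_ge0.
lra.
Qed.

Lemma card_not_good_sampling_le (R : realType) (V : finType) (e : rel V)
    (eps C : R) (K : {set V}) (k : nat) :
  almost_clique e eps K ->
  #|[set t : {ffun V -> 'I_k} | ~~ good_sampling e K C t]|%:R <=
  (k * #|K| ^ 2)%N%:R *
  expR (C / 4 * ln (#|V|%:R) - (1 - 3 * eps) * (maxdeg e)%:R / (2 * k%:R)) *
  (k ^ #|V|)%:R.
Proof.
move=> acK.
pose f (p : 'I_k * V * V) (t : {ffun V -> 'I_k}) :=
  #|[set v in K | t v == p.1.1] :&: nbhd e p.1.2 :&: nbhd e p.2|.
pose L := C / 4 * ln (#|V|%:R : R).
pose triples := setX (setX [set: 'I_k] K) K.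
apply: (@le_trans _ _ #|[set t | [exists p in triples, (f p t)%:R < L]]|%:R).
  rewrite ler_nat; apply: subset_leq_card; apply/subsetP => t; rewrite !inE.
  move=> /forallPn[i /forall_inPn[u uK /forall_inPn[w wK]]]; rewrite -ltNge => lt.
  by apply/exists_inP; exists (i, u, w); rewrite ?inE /= ?uK ?wK.
apply: (le_trans (card_exists_lt_le_sum_expR _ _ _)).
set X := _ * _ / _.
have per_triple p : p \in triples ->
    \sum_t expR (-1) ^+ f p t <= (k ^ #|V|)%:R * expR (- X).
  by case: p => [[i u w]]; rewrite !inE /= => /andP[uK wK];
    apply: sum_expRN1_common_class_le.
apply: (le_trans (ler_wpM2l (expR_ge0 _) (ler_sum _ per_triple))).
rewrite sumr_const !cardsX cardsT card_ord expRD -mulr_natr !natrM natrX.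
by rewrite le_eqVlt; apply/orP; left; apply/eqP; ring.
Qed.

Lemma sample_size_bounds (R : realType) (V : finType) (e : rel V) (C : R) (k : nat) :
  15 <= C -> (0 < k)%N -> k%:R <= (maxdeg e)%:R / (C * ln (#|V|%:R)) ->
  [/\ 0 < ln (#|V|%:R : R), k%:R * (C * ln (#|V|%:R)) <= (maxdeg e)%:R
    & (k <= #|V|)%N].
Proof.
set l := ln _ => C_ge k0 k_le.
have k_pos : 0 < k%:R :> R by rewrite ltr0n.
have [Cl0 kCl] := le_div_den_gt0 k_pos (ler0n R _) k_le.
have l0 : 0 < l by rewrite -(pmulr_rgt0 _ (_ : 0 < C)) //; lra.
split=> //; rewrite -(ler_nat R).
have n2 : 2 <= #|V|%:R :> R.
  rewrite ler_nat ltnNge; apply/negP; rewrite -(ler_nat R) => /ln_le0.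
  by rewrite -/l; lra.
have l_ge : 1 / 2 <= l by apply: le_trans (ln2_ge_half R) _; rewrite ler_ln ?posrE; lra.
have Cl_ge1 : 1 <= C * l by nra.
have : (maxdeg e)%:R <= #|V|%:R :> R by rewrite ler_nat maxdeg_le_card.
have := ler_wpM2l (ltW k_pos) Cl_ge1; lra.
Qed.

Lemma one_sub_three_eps_ge (R : realFieldType) : 9 / 10 <= 1 - 3 * ((10%:R : R) ^+ 5)^-1.
Proof.
set eps := ((10%:R : R) ^+ 5)^-1.
have pow_ge : 30 <= (10%:R : R) ^+ 5.
  by rewrite -natrX ler_nat (@leq_trans (10 ^ 2)) // leq_exp2l.
have : eps * 10%:R ^+ 5 = 1 by rewrite mulVf // expf_neq0 // pnatr_eq0.
have : 0 <= eps by rewrite invr_ge0 exprn_ge0 // ler0n.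
nra.
Qed.

Lemma sampling_exponent_le (R : realFieldType) (C eps l : R) (k D : nat) :
  0 <= l -> 9 / 10 <= 1 - 3 * eps -> (0 < k)%N -> k%:R * (C * l) <= D%:R ->
  C / 4 * l - (1 - 3 * eps) * D%:R / (2 * k%:R) <= - (C * l) / 5.
Proof.
move=> l0 eps_small k0 kCl.
have : 9 / 10 * (C * l) / 2 <= (1 - 3 * eps) * D%:R / (2 * k%:R).
  rewrite ler_pdivlMr ?mulr_gt0 ?ltr0n //.
  have : 0 <= D%:R :> R by rewrite ler0n.
  nra.
lra.
Qed.

Theorem lemma4p1 (R : realType) (c : R) : 0 < c ->
  exists C0 : R, 0 < C0 /\
  forall (C : R), C0 <= C ->
  forall (alpha : R), 0 < alpha ->
  forall (V : finType) (e : rel V) (Vsparse : {set V}) (P : {set {set V}})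
         (K : {set V}) (k : nat),
    simple_graph e ->
    almost_clique_decomposition e alpha ((10%:R : R) ^+ 5)^-1 Vsparse P ->
    K \in P ->
    (0 < k)%N ->
    (k%:R <= (maxdeg e)%:R / (C * ln (#|V|%:R))) ->
    1 - (#|V|%:R) `^ (- c) <= @prob_uniform R V k (good_sampling e K C).
Proof.
move=> c0; exists (5 * (c + 3)); split=> [|C C_ge _ _ V e _ P K k _ [_ _ acP] KP k0 k_le].
  lra.
have C_ge15 : 15 <= C by lra.
have [l0 kCl kn] := sample_size_bounds C_ge15 k0 k_le.
move: kCl l0; set n := #|V|; set l := ln _; set D := maxdeg e => kCl l0.
have n0 : (0 < n)%N := leq_trans k0 kn.
have eps_small := one_sub_three_eps_ge R.
apply: (prob_uniform_ge k0).
apply: (le_trans (card_not_good_sampling_le C k (acP K KP))).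
apply: ler_wpM2r; first exact: ler0n.
have count_le : (k * #|K| ^ 2)%N%:R <= expR (3%:R * l).
  rewrite expRM_natl lnK ?posrE ?ltr0n // -natrX ler_nat (expnS n) leq_mul //.
  by rewrite leq_exp2r // max_card.
have exponent_le := sampling_exponent_le (ltW l0) eps_small k0 kCl.
have -> : n%:R `^ (- c) = expR (- c * l) by rewrite /powR gt_eqF ?ltr0n.
rewrite -ler_expR in exponent_le.
apply: (le_trans (ler_pM (ler0n _ _) (expR_ge0 _) count_le exponent_le)).
by rewrite -expRD ler_expR; nra.
Qed.
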